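(* Let $G$ be a finite nilpotent group such that $sd^*(G)>23/25$. Then $G$ is modular (that is, its subgroup lattice $L(G)$ is a modular lattice), and consequently $G$ is an Iwasawa group.
   Context: For a finite group $G$, $L(G)$ denotes the lattice of all subgroups of $G$. The subgroup commutativity degree of $G$ is $$sd(G)=\frac{1}{|L(G)|^2}\,\left|\{(H,K)\in L(G)^2 \mid HK=KH\}\right|,$$ the probability that two subgroups of $G$ commute. Define $sd^*(G)=\min\{sd(S)\mid S \text{ is a section of } G\}$, where a section of $G$ is a quotient $H/N$ with $N\trianglelefteq H\le G$. An Iwasawa group is a finite nilpotent group whose subgroup lattice is modular. *)

From HB Require Import structures.
From mathcomp Require Import all_boot all_order all_algebra all_fingroup all_solvable.
Set Implicit Arguments. Unset Strict Implicit. Unset Printing Implicit Defensive.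
Import Order.TTheory GRing.Theory Num.Theory.

Open Scope group_scope.

Definition subgroup_lattice (gT : finGroupType) (G : {set gT}) : {set {group gT}} :=
  [set H : {group gT} | H \subset G].

Definition commuting_pairs (gT : finGroupType) (G : {set gT})
  : {set {group gT} * {group gT}} :=
  [set HK : {group gT} * {group gT} |
     [&& HK.1 \subset G, HK.2 \subset G & (HK.1 * HK.2 == HK.2 * HK.1)%g]].

Definition sd (gT : finGroupType) (G : {set gT}) : rat :=
  ((#|commuting_pairs G|)%:R / ((#|subgroup_lattice G|) ^ 2)%:R)%R.

(* sd^*(G) = min { sd(H/N) | N <| H <= G }.  Since sd <= 1 (and the trivial
   section has sd = 1), 1 is a neutral initial value for the minimum. *)
Definition sdstar (gT : finGroupType) (G : {set gT}) : rat :=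
  \big[Num.min/1%R]_(H : {group gT} | H \subset G)
     \big[Num.min/1%R]_(N : {group gT} | N <| H) sd (H / N).

Definition modular_group (gT : finGroupType) (G : {set gT}) : Prop :=
  forall A B C : {group gT},
    A \subset G -> B \subset G -> C \subset G -> A \subset C ->
    A <*> (B :&: C) = (A <*> B) :&: C.

Definition iwasawa (gT : finGroupType) (G : {set gT}) : Prop :=
  nilpotent G /\ modular_group G.

From mathcomp Require Import all_boot all_order all_algebra all_fingroup all_solvable zify.
Set Implicit Arguments. Unset Strict Implicit. Unset Printing Implicit Defensive.
Import GroupScope.

(* Call a group quasi-Hamiltonian when any two of its subgroups permute.  Joins
   of subgroups are then products, so Dedekind's law makes the subgroup lattice
   modular.  We show by induction on |H/N| that every section H/N of G is
   quasi-Hamiltonian.  A minimal counterexample S is a p-group, because a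
   nilpotent group is the direct product of its p- and p'-parts.  Two
   non-permuting cyclic subgroups <x>, <y> of S must then generate S and meet
   trivially, and minimality, applied to proper subgroups, to quotients and to
   the Frattini subgroup, forces x^p = y^p = 1 and |S| = p^3.  In such a group
   the center has order p, at least 2p subgroups of order p are not central, and
   each of these permutes with at most p of them; counting pairs of subgroups
   gives sd(S) <= 23/25, with equality for the dihedral group of order 8. *)

Definition quasi_hamiltonian (gT : finGroupType) (G : {set gT}) :=
  forall A B : {group gT}, A \subset G -> B \subset G -> commute A B.

(* G / N is quasi-Hamiltonian, stated inside G. *)
Definition quasi_hamiltonian_mod (gT : finGroupType) (N G : {set gT}) :=
  forall A B : {group gT},
    N \subset A -> A \subset G -> N \subset B -> B \subset G -> commute A B.

(** * Permutable subgroups *)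

Section Permutability.
Variable gT : finGroupType.
Implicit Types (A B H M : {group gT}) (G : {set gT}).

Lemma commute_subset A B : A * B \subset B * A -> commute A B.
Proof.
by move=> sABBA; rewrite /commute; apply/eqP; rewrite eqEcard sABBA /= -invMG card_invg.
Qed.

Lemma commute_cycles A B :
  (forall a b, a \in A -> b \in B -> commute <[a]> <[b]>) -> commute A B.
Proof.
move=> cAB; apply: commute_subset; apply/subsetP => _ /mulsgP[a b Aa Bb ->].
have: a * b \in <[b]> * <[a]> by rewrite -cAB // mem_mulg ?cycle_id.
by apply/subsetP/mulgSS; rewrite cycle_subG.
Qed.

Lemma quasi_hamiltonian_modular G : quasi_hamiltonian G -> modular_group G.
Proof.
move=> qhG A B C sAG sBG _ sAC.
rewrite (comm_joingE (qhG _ _ sAG (subset_trans (subsetIl B C) sBG))).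
by rewrite (comm_joingE (qhG _ _ sAG sBG)) group_modl.
Qed.

Lemma commute_quotient M A B :
  A \subset 'N(M) -> B \subset 'N(M) -> commute A B -> commute (A / M) (B / M).
Proof. by move=> nMA nMB cAB; rewrite /commute -!quotientMl // cAB. Qed.

Lemma commute_quotientK M A B : M \subset A -> M \subset B ->
  A \subset 'N(M) -> B \subset 'N(M) -> commute (A / M) (B / M) -> commute A B.
Proof.
move=> sMA sMB nMA nMB cABM.
have cosetpreM (C D : {group gT}) : M \subset C -> C \subset 'N(M) ->
    M \subset D -> D \subset 'N(M) -> coset M @*^-1 (C / M * (D / M)) = C * D.
  move=> sMC nMC sMD nMD; rewrite morphpreMl ?quotientS //.
  by rewrite !quotientK // (mulSGid sMC) (mulSGid sMD).
by rewrite /commute -cosetpreM // cABM cosetpreM.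
Qed.

Lemma quasi_hamiltonian_quotientK H M :
  M <| H -> quasi_hamiltonian (H / M) -> quasi_hamiltonian_mod M H.
Proof.
move=> /andP[_ nMH] qhHM A B sMA sAH sMB sBH.
have [nMA nMB] := (subset_trans sAH nMH, subset_trans sBH nMH).
apply: (commute_quotientK sMA sMB nMA nMB).
exact: (qhHM _ _ (quotientS _ sAH) (quotientS _ sBH)).
Qed.

End Permutability.

Lemma quasi_hamiltonian_mod_quotient (gT : finGroupType) (H M N : {group gT}) :
  N <| H -> M <| H -> quasi_hamiltonian (H / M) ->
  quasi_hamiltonian_mod (M / N) (H / N).
Proof.
move=> nNH nMH qhHM A B sMA sAH sMB sBH.
have nNM := subset_trans (normal_sub nMH) (normal_norm nNH).
rewrite -(cosetpreK A) -(cosetpreK B); apply: commute_quotient; try exact: subsetIl.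
by apply: (quasi_hamiltonian_quotientK nMH);
  rewrite ?sub_cosetpre_quo -?sub_quotient_pre.
Qed.

Lemma quasi_hamiltonian_nil_pcoreC (gT : finGroupType) (pi : nat_pred) (S : {group gT}) :
  nilpotent S -> quasi_hamiltonian 'O_pi(S) -> quasi_hamiltonian 'O_pi^'(S) ->
  quasi_hamiltonian S.
Proof.
move=> nilS qhP qhQ A B sAS sBS.
have [_ _ cPQ _] := dprodP (nilpotent_pcoreC pi nilS).
have constt_sub (D : {group gT}) (rho : nat_pred) a : a \in D -> a.`_rho \in D.
  by move=> Da; apply: subsetP (cycle_constt rho a); rewrite cycle_subG.
have constt_pcore (rho : nat_pred) a : a \in S -> a.`_rho \in 'O_rho(S).
  move=> Sa; rewrite (mem_normal_Hall (nilpotent_pcore_Hall rho nilS)) ?pcore_normal //.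
    exact: p_elt_constt.
  exact: constt_sub.
apply: commute_subset; apply/subsetP => _ /mulsgP[a b Aa Bb ->].
have [Sa Sb] := (subsetP sAS a Aa, subsetP sBS b Bb).
have cABP := qhP (A :&: 'O_pi(S))%G (B :&: 'O_pi(S))%G (subsetIr _ _) (subsetIr _ _).
have cABQ := qhQ (A :&: 'O_pi^'(S))%G (B :&: 'O_pi^'(S))%G (subsetIr _ _) (subsetIr _ _).
have /mulsgP[b1 a1 /setIP[Bb1 Pb1] /setIP[Aa1 Pa1] def_ab1] :
    a.`_pi * b.`_pi \in (B :&: 'O_pi(S)) * (A :&: 'O_pi(S)).
  by rewrite -cABP; apply: mem_mulg; rewrite /= inE ?constt_pcore ?constt_sub.
have /mulsgP[b2 a2 /setIP[Bb2 Qb2] /setIP[Aa2 Qa2] def_ab2] :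
    a.`_pi^' * b.`_pi^' \in (B :&: 'O_pi^'(S)) * (A :&: 'O_pi^'(S)).
  by rewrite -cABQ; apply: mem_mulg; rewrite /= inE ?constt_pcore ?constt_sub.
have cPQel u v : u \in 'O_pi(S) -> v \in 'O_pi^'(S) -> commute u v.
  by move=> Pu Qv; apply/esym/(centP (subsetP cPQ v Qv)).
have -> : a * b = (b1 * b2) * (a1 * a2).
  rewrite -(consttC pi a) -(consttC pi b) mulgA -(mulgA a.`_pi).
  rewrite -(cPQel _ _ (constt_pcore _ _ Sb) (constt_pcore _ _ Sa)) mulgA def_ab1.
  by rewrite -mulgA def_ab2 !mulgA -(mulgA b1) (cPQel _ _ Pa1 Qb2) !mulgA.
by rewrite mem_mulg ?groupM.
Qed.

(** * Counting *)

Lemma leq_card_fibers (T U : finType) (A : {set T}) (f : T -> U) (B : {set U}) m :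
  (forall u, u \in B -> m <= #|[set t in A | f t == u]|) -> #|B| * m <= #|A|.
Proof.
move=> leq_m_fiber; rewrite -sum_nat_const.
apply: (@leq_trans (\sum_(u in B) #|[set t in A | f t == u]|)).
  exact: leq_sum.
rewrite -sum1_card (partition_big f predT) //= [X in _ <= X](bigID (mem B)) /=.
apply: leq_trans (leq_addr _ _); apply: leq_sum => u Bu.
by rewrite -sum1_card; apply: eq_leq; apply: eq_bigl => t; rewrite inE.
Qed.

Lemma leq_card_mulG (gT : finGroupType) (A B : {group gT}) : #|A * B| <= #|A| * #|B|.
Proof. by rewrite dvdn_leq ?muln_gt0 ?cardG_gt0 ?dvdn_cardMg. Qed.

Lemma card_joing_mod_le (gT : finGroupType) (X Y N : {group gT}) :
  commute (X <*> N) (Y <*> N) -> #|X <*> Y| * #|N| <= #|X <*> N| * #|Y <*> N|.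
Proof.
move=> cXNYN; rewrite (mul_cardG (X <*> N)%G (Y <*> N)%G) leq_mul //.
  rewrite subset_leq_card // -comm_joingE //.
  exact: genS (setUSS (joing_subl X N) (joing_subl Y N)).
by rewrite subset_leq_card // subsetI !joing_subr.
Qed.

Lemma card_norm_joing_le (gT : finGroupType) (A N B : {group gT}) :
  A \subset 'N(N) -> B \subset A :&: N -> #|A <*> N| * #|B| <= #|A| * #|N|.
Proof.
by move=> nNA sBAN; rewrite norm_joinEl // mul_cardG leq_mul2l subset_leq_card ?orbT.
Qed.

Section PGroups.
Variables (gT : finGroupType) (p : nat).
Hypothesis p_pr : prime p.
Implicit Types (a b : gT) (A D H K S : {group gT}).

Lemma card_proper_pgroup H K : p.-group H -> K \proper H -> p * #|K| <= #|H|.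
Proof.
move=> pH /andP[sKH not_sHK].
have [k def_k] := p_natP (pnat_dvd (dvdn_indexg H K) pH).
have index_gt1 : 1 < #|H : K| by rewrite indexg_gt1.
rewrite -(Lagrange sKH) mulnC leq_mul2l def_k; apply/orP; right.
case: k def_k index_gt1 => [-> //|k _ _].
by rewrite -{1}(expn1 p) leq_exp2l ?prime_gt1.
Qed.

Lemma card_prime_subgroups H :
  #|[set K : {group gT} | K \subset H & #|K| == p]| * p.-1 <= #|H|.-1.
Proof.
have card_nt K : #|K^#| = #|K|.-1 by rewrite [#|K|](cardsD1 1) group1.
rewrite -card_nt; apply: (leq_card_fibers (f := fun g => <[g]>%G)) => K.
rewrite inE => /andP[sKH /eqP oK]; rewrite -oK -card_nt.
apply: subset_leq_card; apply/subsetP => g /setD1P[ntg Kg].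
rewrite !inE ntg (subsetP sKH) //=; apply/eqP/group_inj/eqP => /=.
rewrite eqEcard cycle_subG Kg -orderE oK /=.
have /(prime_nt_dvdP p_pr) -> // : #[g] %| p by rewrite -oK order_dvdG.
by rewrite order_eq1.
Qed.

Lemma pgroup_normal_index_p D K :
  p.-group K -> D \subset K -> #|K| = (#|D| * p)%N -> D <| K.
Proof.
move=> pK sDK oK; apply: (p_maximal_normal pK); apply: p_index_maximal => //.
by rewrite -divgS // oK mulKn.
Qed.

Lemma card_cycle_expn a : p.-elt a -> a != 1 -> (#[a ^+ p] * p)%N = #[a].
Proof.
move=> pa nt_a; have nt_Xa : <[a]> :!=: 1 by rewrite cycle_eq1.
have [_ p_dv_a _] := pgroup_pdiv pa nt_Xa.
by rewrite orderXdiv ?divnK.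
Qed.

Lemma pgroup_joing_cycle_expn S A b :
  p.-group S -> b \in S -> A <*> <[b ^+ p]> = S -> A :=: S.
Proof.
move=> pS Sb defS; have [sAS _] := joing_sub defS.
have Phi_bp : b ^+ p \in 'Phi(S).
  by rewrite (Phi_joing pS) mem_gen // inE orbC -(expn1 p) (Mho_p_elt 1) ?(mem_p_elt pS).
rewrite -(genGid A); apply: Phi_nongen; apply/eqP.
rewrite eqEsubset join_subG Phi_sub sAS -{1}defS join_subG joing_subr cycle_subG.
exact: subsetP (joing_subl _ _) _ Phi_bp.
Qed.

End PGroups.

Section SubgroupCommutativityDegree.
Import GRing.Theory Num.Theory.

Lemma sd_le_23_25 (gT : finGroupType) (S : {group gT}) :
  2 * #|subgroup_lattice S| ^ 2 <=
    25 * #|setX (subgroup_lattice S) (subgroup_lattice S) :\: commuting_pairs S| ->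
  (sd S <= 23%:R / 25%:R)%R.
Proof.
set L := subgroup_lattice S => many_noncommuting.
have sCLL : commuting_pairs S \subset setX L L.
  by apply/subsetP => -[A B]; rewrite !inE => /and3P[-> -> _].
have card_LL : (#|commuting_pairs S| + #|setX L L :\: commuting_pairs S| = #|L| ^ 2)%N.
  by rewrite cardsD (setIidPr sCLL) subnKC ?subset_leq_card // cardsX mulnn.
have L_gt0 : 0 < #|L| by apply/card_gt0P; exists S; rewrite inE.
rewrite /sd ler_pdivrMr ?ltr0n ?expn_gt0 ?L_gt0 // mulrAC ler_pdivlMr ?ltr0n //.
by rewrite -!natrM ler_nat -/L; lia.
Qed.

End SubgroupCommutativityDegree.

(* Equality holds for p = 2, o = 4: the dihedral group of order 8. *)
Lemma sd_count_ineq p o :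
  1 < p -> 2 * p <= o -> 2 * (o + p + 4) ^ 2 <= 25 * (o * (o - p)).
Proof. by move=> *; nia. Qed.

(** * Nonabelian groups of order p^3 *)

Section NonabelianOrderCube.
Variables (gT : finGroupType) (p : nat) (S : {group gT}) (x y : gT).
Hypotheses (p_pr : prime p) (oS : #|S| = (p ^ 3)%N) (Sx : x \in S) (Sy : y \in S).
Hypotheses (ox : #[x] = p) (oy : #[y] = p) (defS : <[x]> <*> <[y]> = S).
Hypothesis not_cXY : ~ commute <[x]> <[y]>.

Let p_gt1 : 1 < p := prime_gt1 p_pr.
Let pS : p.-group S. Proof. by rewrite /pgroup oS pnatX pnat_id. Qed.
Local Notation C := 'Z(S).
Implicit Types H A B : {group gT}.

Lemma commute_center_cycle z w : z \in C -> w \in S -> commute <[z]> <[w]>.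
Proof.
move=> /setIP[_ cSz] Sw; apply: centC.
by rewrite cycle_subG (subsetP (centS _) z cSz) // cycle_subG.
Qed.

Lemma generators_not_central : (x \notin C) && (y \notin C).
Proof.
apply/andP; split; apply/negP => Cz; apply: not_cXY; first exact: commute_center_cycle.
exact/esym/commute_center_cycle.
Qed.

Lemma nonabelian_order_cube : ~~ abelian S.
Proof.
apply/negP => cSS; apply: not_cXY; apply: centC.
have [sXS sYS] : <[x]> \subset S /\ <[y]> \subset S by rewrite !cycle_subG.
exact: subset_trans sXS (subset_trans cSS (centS sYS)).
Qed.

Lemma card_center_order_cube : #|C| = p.
Proof.
apply: card_center_extraspecial pS _.
by apply: (p3group_extraspecial pS nonabelian_order_cube); rewrite oS pfactorK.
Qed.

Lemma center_sub_order_square H : H \subset S -> #|H| = (p ^ 2)%N -> C \subset H.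
Proof.
move=> sHS oH.
have iSH : #|S : H| = p.
  by apply/eqP; rewrite -(eqn_pmul2l (cardG_gt0 H)) Lagrange // oH oS -expnSr.
have nHS : H <| S by apply: (p_maximal_normal pS); apply: p_index_maximal; rewrite ?iSH.
apply/negPn/negP => not_sCH.
have tiHC : H :&: C = 1 by rewrite setIC prime_TIg ?card_center_order_cube.
move: oH; rewrite (TI_center_nil (pgroup_nil pS) nHS tiHC) cards1; nia.
Qed.

Lemma card_order_square_subgroups :
  #|[set H : {group gT} | H \subset S & #|H| == (p ^ 2)%N]| <= p.+1.
Proof.
set P2 := [set H : {group gT} | _ & _].
have: #|P2| * (p ^ 2 - p) <= #|S :\: C|.
  apply: (leq_card_fibers (f := fun g => (<[g]> <*> C)%G)) => H.
  rewrite inE => /andP[sHS /eqP oH]; have sCH := center_sub_order_square sHS oH.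
  have -> : (p ^ 2 - p = #|H :\: C|)%N.
    by rewrite cardsD (setIidPr sCH) oH card_center_order_cube.
  apply: subset_leq_card; apply/subsetP => g /setDP[Hg notCg].
  rewrite inE in_setD notCg (subsetP sHS) //=; apply/eqP/group_inj/eqP => /=.
  rewrite eqEcard join_subG cycle_subG Hg sCH oH /=.
  have ltCgC : C \proper <[g]> <*> C.
    rewrite properE joing_subr; apply: contra notCg => sgCC.
    exact: subsetP sgCC g (subsetP (joing_subl _ _) g (cycle_id g)).
  have sgCS : <[g]> <*> C \subset S.
    by rewrite join_subG cycle_subG (subsetP sHS) ?center_sub.
  apply: leq_trans (card_proper_pgroup p_pr (pgroupS sgCS pS) ltCgC).
  by rewrite card_center_order_cube mulnn.
rewrite cardsD (setIidPr (center_sub S)) oS card_center_order_cube.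
by move: #|P2| => n le_n; nia.
Qed.

Let noncentral := [set A : {group gT} | [&& A \subset S, #|A| == p & A != 'Z(S)%G]].

Lemma card_subgroup_lattice_order_cube :
  #|subgroup_lattice S| <= #|noncentral| + p + 4.
Proof.
set P2 := [set H : {group gT} | H \subset S & #|H| == (p ^ 2)%N].
have cardU (U V : {set {group gT}}) : #|U :|: V| <= #|U| + #|V|.
  by rewrite cardsU leq_subr.
have sLS : subgroup_lattice S \subset noncentral :|: ([set 1%G; 'Z(S)%G; S] :|: P2).
  apply/subsetP => H; rewrite inE => sHS; have [l oH] := p_natP (pgroupS sHS pS).
  have: l <= 3 by rewrite -(leq_exp2l _ _ p_gt1) -oH -oS subset_leq_card.
  rewrite !inE sHS oH; case: l oH => [|[|[|[|//]]]] oH _ /=.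
  - by rewrite (group_inj (card1_trivg oH)) eqxx !orbT.
  - by rewrite expn1 eqxx; case: (H == 'Z(S)%G); rewrite /= ?orbT.
  - by rewrite eqxx !orbT.
  - suff -> : H = S by rewrite eqxx !orbT.
    by apply/group_inj/eqP; rewrite eqEcard sHS oH oS /=.
have card3 : #|[set 1%G; 'Z(S)%G; S]| <= 3.
  by apply: leq_trans (cardU _ _) _; rewrite cardsU1 !cards1; case: (_ \notin _).
apply: leq_trans (subset_leq_card sLS) _; apply: leq_trans (cardU _ _) _.
rewrite -addnA leq_add2l; apply: leq_trans (cardU _ _) _.
by apply: leq_trans (leq_add card3 card_order_square_subgroups) _; lia.
Qed.

Lemma card_join_center A : A \subset S -> #|A <*> C| <= #|A| * p.
Proof.
move=> sAS; rewrite cent_joinEr; last first.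
  exact: subset_trans (subsetIr S _) (centS sAS).
by rewrite -card_center_order_cube leq_card_mulG.
Qed.

Section CyclesModCenter.
Variable z : gT.
Hypotheses (Sz : z \in S) (notCz : z \notin C) (oz : #[z] = p).

Lemma order_mul_center c : c \in C -> #[z * c] = p.
Proof.
move=> Cc; have /centerP[_ cSc] := Cc.
apply/(prime_nt_dvdP p_pr).
  rewrite order_eq1; apply: contraNneq notCz => zc1.
  by rewrite -(mulgK c z) zc1 mul1g groupV.
have: #[c] %| p by rewrite -card_center_order_cube order_dvdG.
rewrite !order_dvdn expgMn; last exact/esym/cSc.
by move/eqP->; rewrite -oz expg_order mulg1.
Qed.

Lemma cycle_mul_center_noncentral c : c \in C -> <[z * c]>%G \in noncentral.
Proof.
move=> Cc; rewrite inE cycle_subG groupM ?(subsetP (center_sub S) c Cc) //=.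
rewrite -orderE order_mul_center // eqxx /=; apply: contra notCz.
by move=> /eqP/(congr1 val) /= defC; have := cycle_id (z * c); rewrite defC (groupMr _ Cc).
Qed.

Lemma cycle_mul_center_sub c : c \in C -> <[z * c]> \subset <[z]> <*> C.
Proof.
move=> Cc; rewrite cycle_subG groupM //.
  exact: subsetP (joing_subl _ _) z (cycle_id z).
exact: subsetP (joing_subr _ _) c Cc.
Qed.

Lemma cycle_mul_center_inj : {in C &, injective (fun c => <[z * c]>%G)}.
Proof.
move=> c c' Cc Cc' /= eq_zc.
have tiZ : <[z * c]> :&: C = 1.
  apply: prime_TIg; first by rewrite -orderE order_mul_center.
  by rewrite cycle_subG groupMr.
have zc'_zc : z * c' \in <[z * c]>.
  by rewrite -[<[z * c]>]/(gval <[z * c]>%G) eq_zc cycle_id.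
have: (z * c)^-1 * (z * c') \in <[z * c]> :&: C.
  by rewrite in_setI groupM ?groupV ?cycle_id //= invMg -mulgA mulKg groupM ?groupV.
rewrite tiZ inE invMg -mulgA mulKg => /eqP cc'1.
by apply: (mulgI c^-1); rewrite mulVg cc'1.
Qed.

End CyclesModCenter.

Lemma two_p_le_card_noncentral : 2 * p <= #|noncentral|.
Proof.
(* <[x * c]> = <[y * c']> would put y, hence S, in <[x]> <*> C of order p^2. *)
have /andP[notCx notCy] := generators_not_central.
pose Ox := [set <[x * c]>%G | c in C]; pose Oy := [set <[y * c]>%G | c in C].
have tiOxy : Ox :&: Oy = set0.
  apply/eqP; rewrite -subset0; apply/subsetP => _ /setIP[/imsetP[c Cc ->]].
  case/imsetP=> c' Cc' eq_xy.
  have yc'_xC : y * c' \in <[x]> <*> C.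
    apply: subsetP (cycle_mul_center_sub x Cc) _ _.
    by rewrite -[<[x * c]>]/(gval <[x * c]>%G) eq_xy cycle_id.
  have y_xC : y \in <[x]> <*> C.
    rewrite -(mulgK c' y); apply: groupM => //; rewrite groupV.
    exact: subsetP (joing_subr _ _) c' Cc'.
  have sSxC : S \subset <[x]> <*> C by rewrite -{1}defS join_subG joing_subl cycle_subG.
  have := leq_trans (subset_leq_card sSxC) (card_join_center _).
  by rewrite cycle_subG -orderE ox oS => /(_ Sx); nia.
have sOxyNc : Ox :|: Oy \subset noncentral.
  apply/subsetP => _ /setUP[] /imsetP[c Cc ->]; exact: cycle_mul_center_noncentral.
apply: leq_trans (subset_leq_card sOxyNc).
rewrite cardsU tiOxy cards0 subn0 !card_in_imset ?card_center_order_cube ?mul2n ?addnn //.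
  exact: cycle_mul_center_inj.
exact: cycle_mul_center_inj.
Qed.

Lemma card_noncentral_sub_join_center A :
  A \in noncentral -> #|noncentral :&: [set B : {group gT} | B \subset A <*> C]| <= p.
Proof.
rewrite inE => /and3P[sAS /eqP oA neAC].
set Ps := [set B : {group gT} | B \subset A <*> C & #|B| == p].
have card_Ps : #|Ps| <= p.+1.
  have := card_prime_subgroups p_pr (A <*> C)%G; rewrite -/Ps.
  have := card_join_center sAS; rewrite oA.
  by move: #|Ps| #|_| => n m le_m le_nm; nia.
have C_Ps : 'Z(S)%G \in Ps by rewrite inE joing_subr card_center_order_cube /=.
have sNcPs : noncentral :&: [set B : {group gT} | B \subset A <*> C]
    \subset Ps :\ 'Z(S)%G.
  apply/subsetP => B; rewrite !inE => /andP[/and3P[_ /eqP oB neBC] sBAC].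
  by rewrite neBC sBAC oB eqxx.
apply: leq_trans (subset_leq_card sNcPs) _.
by move: card_Ps; rewrite (cardsD1 'Z(S)%G Ps) C_Ps.
Qed.

Lemma noncentral_not_commute A B : A \in noncentral -> B \in noncentral ->
  ~~ (B \subset A <*> C) -> ~ commute A B.
Proof.
(* A * B would have order p^2, hence contain C, so it would equal A <*> C. *)
rewrite !inE => /and3P[sAS /eqP oA neAC] /and3P[sBS /eqP oB _] not_sBAC cAB.
have sABS : A <*> B \subset S by rewrite join_subG sAS.
have ltAAB : A \proper A <*> B.
  rewrite properE joing_subl; apply: contra not_sBAC => sABA.
  exact: subset_trans (joing_subr A B) (subset_trans sABA (joing_subl A C)).
have oAB : #|A <*> B| = (p ^ 2)%N.
  apply/eqP; rewrite eqn_leq; apply/andP; split.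
    by rewrite comm_joingE // -mulnn -{1}oA -oB leq_card_mulG.
  by have := card_proper_pgroup p_pr (pgroupS sABS pS) ltAAB; rewrite oA mulnn.
have sACAB : A <*> C \subset A <*> B.
  by rewrite join_subG joing_subl center_sub_order_square.
have ltAAC : A \proper A <*> C.
  rewrite properE joing_subl; apply: contra neAC => sCA.
  apply/eqP/group_inj/eqP; rewrite eq_sym eqEcard card_center_order_cube oA leqnn andbT.
  exact: subset_trans (joing_subr A C) sCA.
have: #|A <*> B| <= #|A <*> C|.
  have := card_proper_pgroup p_pr (pgroupS (subset_trans sACAB sABS) pS) ltAAC.
  by rewrite oAB oA mulnn.
move=> le_AB_AC; have eqACAB : A <*> C = A <*> B.
  by apply/eqP; rewrite eqEcard sACAB.
by move: not_sBAC; rewrite eqACAB joing_subr.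
Qed.

Lemma card_noncommuting_pairs_order_cube : #|noncentral| * (#|noncentral| - p) <=
  #|setX (subgroup_lattice S) (subgroup_lattice S) :\: commuting_pairs S|.
Proof.
apply: (leq_card_fibers (f := fst)) => A ncA.
set D := noncentral :\: [set B : {group gT} | B \subset A <*> C].
have: #|noncentral| - p <= #|D|.
  by rewrite cardsD leq_sub2l ?card_noncentral_sub_join_center.
move/leq_trans; apply.
have inj_pair : injective (fun B : {group gT} => (A, B)) by move=> B1 B2 [].
rewrite -(card_imset D inj_pair).
apply: subset_leq_card; apply/subsetP => _ /imsetP[B /setDP[ncB notsBAC] ->].
have [sAS sBS] : A \subset S /\ B \subset S.
  by move: ncA ncB; rewrite !inE => /and3P[-> _ _] /and3P[-> _ _].
rewrite !inE /= sAS sBS eqxx !andbT; apply/eqP => cAB.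
by apply: noncentral_not_commute ncA ncB _ cAB; move: notsBAC; rewrite inE.
Qed.

Lemma sd_order_cube : (sd S <= 23%:R / 25%:R)%R.
Proof.
apply: sd_le_23_25.
apply: leq_trans (leq_mul (leqnn 25) card_noncommuting_pairs_order_cube).
apply: leq_trans (sd_count_ineq p_gt1 two_p_le_card_noncentral).
by rewrite leq_mul2l /= leq_exp2r // card_subgroup_lattice_order_cube.
Qed.

End NonabelianOrderCube.

(** * A minimal counterexample *)

Section MinimalCounterexample.
Variables (gT : finGroupType) (p : nat) (S : {group gT}) (x y : gT).
Hypotheses (p_pr : prime p) (pS : p.-group S).
Hypothesis qh_proper : forall K : {group gT}, K \proper S -> quasi_hamiltonian K.
Hypothesis qh_mod : forall N : {group gT}, N <| S -> N :!=: 1 -> quasi_hamiltonian_mod N S.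
Hypotheses (Sx : x \in S) (Sy : y \in S) (not_cXY : ~ commute <[x]> <[y]>).
Implicit Types (A B N : {group gT}) (a b : gT).

Let p_gt1 : 1 < p := prime_gt1 p_pr.
Let sXS : <[x]> \subset S. Proof. by rewrite cycle_subG. Qed.
Let sYS : <[y]> \subset S. Proof. by rewrite cycle_subG. Qed.

Lemma commute_of_joing_proper A B :
  A \subset S -> B \subset S -> A <*> B != S -> commute A B.
Proof.
move=> sAS sBS neABS; apply: (qh_proper (K := (A <*> B)%G)).
- by rewrite properEneq neABS join_subG sAS.
- exact: joing_subl.
- exact: joing_subr.
Qed.

Lemma joing_generators : <[x]> <*> <[y]> = S.
Proof.
case: (eqVneq (<[x]> <*> <[y]>) S) => // neXYS.
by case: not_cXY; apply: commute_of_joing_proper.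
Qed.

Lemma commute_cycle_of_normal_sub a b N : a \in S -> b \in S ->
  N <| S -> N :!=: 1 -> N \subset <[a]> -> commute <[a]> <[b]>.
Proof.
move=> Sa Sb nNS ntN sNa; have [sNS nNS'] := andP nNS.
have nNb : <[b]> \subset 'N(N) by rewrite cycle_subG (subsetP nNS').
have sbNS : <[b]> <*> N \subset S by rewrite join_subG cycle_subG Sb.
have := qh_mod nNS ntN sNa _ (joing_subr _ _) sbNS; rewrite cycle_subG => /(_ Sa) /=.
rewrite /commute norm_joinEl // {1}(normC nNb) mulgA (mulGSid sNa) -mulgA (mulSGid sNa).
by move->.
Qed.

Lemma generators_neq1 : (x != 1) && (y != 1).
Proof.
apply/andP; split; apply/eqP => a1; apply: not_cXY.
  by rewrite a1 cycle1 /commute mul1g mulg1.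
by rewrite a1 cycle1 /commute mul1g mulg1.
Qed.

Lemma generators_TI : <[x]> :&: <[y]> = 1.
Proof.
case: (eqVneq (<[x]> :&: <[y]>) 1) => // ntI; case: not_cXY.
have nIS : (<[x]> :&: <[y]>)%G <| S.
  rewrite /normal (subset_trans (subsetIl _ _) sXS) -joing_generators join_subG.
  by rewrite !cents_norm // (sub_abelian_cent (cycle_abelian _)) ?subsetIl ?subsetIr.
exact: commute_cycle_of_normal_sub Sx Sy nIS ntI (subsetIl _ _).
Qed.

Lemma card_generators_lt : #[x] * #[y] < #|S|.
Proof.
rewrite !orderE -TI_cardMg ?generators_TI //; apply: proper_card.
rewrite properEneq mul_subG // andbT; apply/negP => /eqP defS.
by apply: not_cXY; apply/comm_group_setP; rewrite defS groupP.
Qed.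

Lemma joing_generator_expn_neq a b :
  b \in S -> ~ commute <[a]> <[b]> -> <[a]> <*> <[b ^+ p]> != S.
Proof.
move=> Sb not_cab; apply/eqP => /(pgroup_joing_cycle_expn pS Sb) defS; apply: not_cab.
have sbS : <[b]> \subset S by rewrite cycle_subG.
by rewrite /commute defS (mulGSid sbS) (mulSGid sbS).
Qed.

Lemma card_expn_generators : (#|<[x ^+ p]>| * p = #[x])%N /\ (#|<[y ^+ p]>| * p = #[y])%N.
Proof.
have /andP[ntx nty] := generators_neq1.
by split; apply: card_cycle_expn; rewrite ?(mem_p_elt pS).
Qed.

Lemma commute_expn_generators : commute <[x ^+ p]> <[y ^+ p]>.
Proof.
apply: (qh_proper (K := (<[x]> <*> <[y ^+ p]>)%G)).
- by rewrite properEneq joing_generator_expn_neq // join_subG sXS cycle_subG groupX.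
- exact: subset_trans (cycleX x p) (joing_subl _ _).
- exact: joing_subr.
Qed.

Lemma card_joing_sub_generators A B : A \subset <[x]> -> B \subset <[y]> ->
  commute A B -> #|A <*> B| = (#|A| * #|B|)%N.
Proof.
move=> sAX sBY cAB; rewrite comm_joingE // TI_cardMg //.
by apply/trivgP; rewrite -generators_TI setISS.
Qed.

Lemma normal_expn_generators : <[x ^+ p]> <*> <[y ^+ p]> <| S.
Proof.
(* It has index p in <[x]> <*> <[y ^+ p]> and in <[x ^+ p]> <*> <[y]>. *)
set D := (<[x ^+ p]> <*> <[y ^+ p]>)%G.
have [oXp oYp] := card_expn_generators.
have [sXpX sYpY] := (cycleX x p, cycleX y p).
have cXYp : commute <[x]> <[y ^+ p]>.
  exact: commute_of_joing_proper sXS (subset_trans sYpY sYS) (joing_generator_expn_neq _ _).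
have cXpY : commute <[x ^+ p]> <[y]>.
  apply: commute_of_joing_proper (subset_trans sXpX sXS) sYS _.
  by rewrite joingC; apply: joing_generator_expn_neq => // /esym.
have oD : #|D| = (#|<[x ^+ p]>| * #|<[y ^+ p]>|)%N.
  exact: card_joing_sub_generators commute_expn_generators.
have normal_D A B : A <*> B \subset S -> D \subset A <*> B ->
    #|A <*> B| = (#|D| * p)%N -> D <| A <*> B.
  by move=> sABS; apply: (pgroup_normal_index_p p_pr); apply: pgroupS pS.
have nDK1 : D <| <[x]> <*> <[y ^+ p]>.
  apply: normal_D; first by rewrite join_subG sXS cycle_subG groupX.
    exact: genS (setSU _ sXpX).
  by rewrite oD card_joing_sub_generators // mulnAC oXp.
have nDK2 : D <| <[x ^+ p]> <*> <[y]>.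
  apply: normal_D; first by rewrite join_subG sYS cycle_subG groupX.
    exact: genS (setUS _ sYpY).
  by rewrite oD card_joing_sub_generators // -mulnA oYp.
rewrite /normal join_subG !cycle_subG !groupX //= -joing_generators join_subG.
rewrite (subset_trans (joing_subl _ _) (normal_norm nDK1)).
by rewrite (subset_trans (joing_subr _ _) (normal_norm nDK2)).
Qed.

Lemma card_generators_mod_normal N : N <| S -> N :!=: 1 ->
  #|S| * #|N| <= #|<[x]> <*> N| * #|<[y]> <*> N|.
Proof.
move=> nNS ntN; rewrite -{1}joing_generators card_joing_mod_le //.
apply: (qh_mod nNS ntN); rewrite ?joing_subr //=.
  by rewrite join_subG (normal_sub nNS) cycle_subG Sx.
by rewrite join_subG (normal_sub nNS) cycle_subG Sy.
Qed.

Lemma expn_generators_eq1 : <[x ^+ p]> <*> <[y ^+ p]> = 1.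
Proof.
set D := (<[x ^+ p]> <*> <[y ^+ p]>)%G.
case: (eqVneq (D : {set gT}) 1) => // ntD; exfalso.
have [oXp oYp] := card_expn_generators.
have oD : #|D| = (#|<[x ^+ p]>| * #|<[y ^+ p]>|)%N.
  exact: card_joing_sub_generators (cycleX x p) (cycleX y p) commute_expn_generators.
have nDS := normal_expn_generators; have nD := normal_norm nDS.
have card_join a : a \in S -> (#|<[a ^+ p]>| * p = #[a])%N -> <[a ^+ p]> \subset D ->
    #|<[a]> <*> D| <= p * #|D|.
  move=> Sa oap sapD.
  have nDa : <[a]> \subset 'N(D) by rewrite cycle_subG (subsetP nD).
  have sapXD : <[a ^+ p]> \subset <[a]> :&: D by rewrite subsetI cycleX.
  have := card_norm_joing_le nDa sapXD.
  by rewrite -[#|<[a]>|]/(#[a]) -oap -mulnA mulnC leq_pmul2l.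
(* |S| |D| <= |<[x]> D| |<[y]> D| <= (p |D|)^2 and p^2 |D| = #[x] #[y] < |S|. *)
have := card_generators_mod_normal nDS ntD.
have le_xD := card_join x Sx oXp (joing_subl _ _).
have le_yD := card_join y Sy oYp (joing_subr _ _).
have := card_generators_lt; rewrite -oXp -oYp.
move: (leq_mul le_xD le_yD) (cardG_gt0 D) oD.
move: #|S| #|D| #|<[x ^+ p]>| #|<[y ^+ p]>| (#|_ <*> D| * _)%N => s d a b u.
move=> le_u d_gt0 def_d lt_s le_s.
have: s * d <= (p * p * d) * d by nia.
by rewrite leq_pmul2r // def_d; nia.
Qed.

Lemma order_generators : #[x] = p /\ #[y] = p.
Proof.
have /andP[ntx nty] := generators_neq1.
have order_p a : a ^+ p \in <[x ^+ p]> <*> <[y ^+ p]> -> a != 1 -> #[a] = p.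
  rewrite expn_generators_eq1 inE => /eqP ap1 nta.
  by apply/(prime_nt_dvdP p_pr); rewrite ?order_eq1 ?order_dvdn ?ap1.
split; apply: order_p => //; apply: mem_gen; rewrite inE cycle_id ?orbT //.
Qed.

Lemma card_minimal_counterexample : #|S| = (p ^ 3)%N.
Proof.
have [ox oy] := order_generators; have /andP[ntx _] := generators_neq1.
have ntS : S :!=: 1 by apply/trivgPn; exists x.
have ntZ : 'Z(S) != 1 by rewrite (center_nil_eq1 (pgroup_nil pS)).
have [_ p_dv_Z _] := pgroup_pdiv (pgroupS (center_sub S) pS) ntZ.
have [z Zz oz] := Cauchy p_pr p_dv_Z.
(* The central subgroup <[z]> of order p gives |S| p <= (p * p)^2. *)
have nZS : <[z]> <| S by apply: sub_center_normal; rewrite cycle_subG.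
have ntz : <[z]> :!=: 1 by rewrite cycle_eq1 -order_eq1 oz eqn_leq leqNgt p_gt1.
have card_join a : a \in S -> #[a] = p -> #|<[a]> <*> <[z]>| <= p * p.
  move=> Sa oa; rewrite norm_joinEl; last by rewrite cycle_subG (subsetP (normal_norm nZS)).
  by rewrite -[in X in _ <= X * _]oa -[in X in _ <= _ * X]oz !orderE leq_card_mulG.
have le_S := leq_trans (card_generators_mod_normal nZS ntz)
  (leq_mul (card_join x Sx ox) (card_join y Sy oy)).
have lt_S := card_generators_lt; rewrite ox oy -orderE oz in lt_S le_S.
have [k oS] := p_natP pS; rewrite oS in le_S lt_S *.
have lt2k : 2 < k by rewrite -(ltn_exp2l _ _ p_gt1) -mulnn.
have lek3 : k <= 3.
  by rewrite -ltnS -(leq_exp2l _ _ p_gt1) expnSr (leq_trans le_S) // (expnD p 2 2) -mulnn.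
by have -> : k = 3 by apply/eqP; rewrite eqn_leq lek3.
Qed.

Lemma sd_minimal_counterexample : (sd S <= 23%:R / 25%:R)%R.
Proof.
have [ox oy] := order_generators.
exact: sd_order_cube p_pr card_minimal_counterexample Sx Sy ox oy joing_generators not_cXY.
Qed.

End MinimalCounterexample.

(** * Sections of G *)

Section InductionOnSections.
Import Order.TTheory.

Lemma quasi_hamiltonian_minimal (gT : finGroupType) (S : {group gT}) :
  nilpotent S -> (23%:R / 25%:R < sd S)%R ->
  (forall K : {group gT}, K \proper S -> quasi_hamiltonian K) ->
  (forall N : {group gT}, N <| S -> N :!=: 1 -> quasi_hamiltonian_mod N S) ->
  quasi_hamiltonian S.
Proof.
move=> nilS sd_gt qh_proper qh_mod.
have [le_S1 | gt_S1] := leqP #|S| 1.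
  by move=> A B; rewrite (card_le1_trivg le_S1) => /trivgP-> /trivgP->.
have p_pr := pdiv_prime gt_S1; set p := pdiv #|S| in p_pr.
have [pS | not_pS] := boolP (p.-group S).
  move=> A B sAS sBS; apply: commute_cycles => x y Ax By.
  have [//|/eqP not_cXY] := eqVneq (<[x]> * <[y]>) (<[y]> * <[x]>).
  have [Sx Sy] := (subsetP sAS x Ax, subsetP sBS y By).
  have := sd_minimal_counterexample p_pr pS qh_proper qh_mod Sx Sy not_cXY.
  by rewrite leNgt sd_gt.
apply: (quasi_hamiltonian_nil_pcoreC (pi := p)) nilS _ _; apply: qh_proper.
  rewrite properEneq pcore_sub andbT; apply: contraNneq not_pS => <-.
  exact: pcore_pgroup.
rewrite properEneq pcore_sub andbT; apply/negP => /eqP defS.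
have: p^'.-nat p by apply: pnat_dvd (pdiv_dvd #|S|) _; rewrite -defS; apply: pcore_pgroup.
by rewrite pnatE // !inE eqxx.
Qed.

Lemma sdstar_le_sd (gT : finGroupType) (G H N : {group gT}) :
  H \subset G -> N <| H -> (sdstar G <= sd (H / N)%g)%R.
Proof.
by move=> sHG nNH; apply: le_trans (bigmin_le_cond _ _ sHG) _; apply: bigmin_le_cond.
Qed.

Lemma quasi_hamiltonian_sections (gT : finGroupType) (G : {group gT}) :
  nilpotent G -> (23%:R / 25%:R < sdstar G)%R ->
  forall H N : {group gT}, H \subset G -> N <| H -> quasi_hamiltonian (H / N).
Proof.
move=> nilG sd_gt H N; move: {2}#|H / N| (leqnn #|H / N|) => n.
elim: n H N => [|n IHn] H N le_HN_n sHG nNH.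
  by move: le_HN_n; rewrite leqn0 cards_eq0 => /eqP/setP/(_ 1); rewrite inE group1.
have nNH' := normal_norm nNH.
apply: quasi_hamiltonian_minimal.
- exact: quotient_nil (nilpotentS sHG nilG).
- exact: lt_le_trans sd_gt (sdstar_le_sd sHG nNH).
- move=> Kb ltKb; rewrite -(cosetpreK Kb).
  have sKH : coset N @*^-1 Kb \subset H by rewrite sub_cosetpre_quo // proper_sub.
  apply: IHn (subset_trans sKH sHG) _.
    by rewrite cosetpreK -ltnS (leq_trans (proper_card ltKb)).
  by rewrite /normal sub_cosetpre (subset_trans sKH nNH').
move=> Mb nMb ntMb; rewrite -(cosetpreK Mb); set M := (coset N @*^-1 Mb)%G.
have nMH : M <| H by rewrite -(quotientGK nNH) cosetpre_normal.
apply: (quasi_hamiltonian_mod_quotient nNH nMH (IHn H M _ sHG nMH)).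
have ltNM : #|N| < #|M|.
  rewrite proper_card // properEneq sub_cosetpre andbT; apply: contraNneq ntMb => defM.
  by rewrite -(cosetpreK Mb) -/M -defM trivg_quotient.
have: (#|H / M| * #|M| = #|H / N| * #|N|)%N.
  by rewrite !card_quotient ?normal_norm // !(mulnC #|H : _|) !Lagrange ?normal_sub.
by move: le_HN_n ltNM; move: #|H / M| #|M| #|H / N| #|N| => a m b k; nia.
Qed.

End InductionOnSections.

Theorem theorem1 (gT : finGroupType) (G : {group gT}) :
  nilpotent G -> (23%:R / 25%:R < sdstar G)%R ->
  modular_group G /\ iwasawa G.
Proof.
move=> nilG sd_gt.
have qhG1 := quasi_hamiltonian_sections nilG sd_gt (subxx G) (normal1 G).
have qhG : quasi_hamiltonian G.
  move=> A B sAG sBG.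
  by apply: (quasi_hamiltonian_quotientK (normal1 G) qhG1); rewrite ?sub1G.
have modG := quasi_hamiltonian_modular qhG.
by split; [|split].
Qed.
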